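(* Let $\sigma_0>0$, let $F$ be an $M\times N$ matrix, let $\mathcal{M}$ be a linear subspace of the space of $M\times N$ matrices, and let $(\alpha_n)$ satisfy $0<\alpha_n\le1$ for all $n$. Let $\Lambda^0=0$ and for $n\ge0$ $$X^{n+1}=\mathfrak{S}_{f_0}\Big(F-\frac{\Lambda^n}{2}\Big),\qquad \Lambda^{n+1}=\Lambda^n+\alpha_nP_{\mathcal{M}^\perp}(X^{n+1}).$$ Then the sequences $(X^n)_{n\ge1}$ and $(\Lambda^n)_{n\ge1}$ are bounded.
   Context: The space of $M\times N$ matrices carries the real inner product $\langle X,Y\rangle=\mathrm{Re}\,\mathrm{tr}(Y^*X)$ with Frobenius norm; $P_{\mathcal{M}^\perp}$ is the orthogonal projection onto $\mathcal{M}^\perp$. For $f:[0,\infty)\to\mathbb{C}$ and a matrix $A=U\Sigma_\phi V^*$ (singular value decomposition with singular values $\phi_j$), $\mathfrak{S}_f(A)=U\Sigma_{f(\phi)}V^*$ replaces each singular value $\phi_j$ by $f(\phi_j)$. Here $f_0(x)=0$ for $x<\sigma_0$ and $f_0(x)=x$ for $x\ge\sigma_0$. *)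

From HB Require Import structures.
From mathcomp Require Import all_boot all_order all_algebra.
From mathcomp Require Import complex.
From mathcomp Require Import reals.
Set Implicit Arguments. Unset Strict Implicit. Unset Printing Implicit Defensive.
Import Order.TTheory GRing.Theory Num.Theory.
Local Open Scope ring_scope.

Section Defs.
Variable R : realType.
Local Notation C := (R[i]).

Definition adjmx m n (A : 'M[C]_(m, n)) : 'M[C]_(n, m) :=
  (map_mx (@conjc R) A)^T.

Definition frob_inner m n (X Y : 'M[C]_(m, n)) : R :=
  complex.Re (\tr (adjmx Y *m X)).

Definition frob_norm m n (X : 'M[C]_(m, n)) : R := Num.sqrt (frob_inner X X).

Definition unitary_mx n (U : 'M[C]_n) : Prop :=
  U *m adjmx U = 1%:M /\ adjmx U *m U = 1%:M.

Definition rdiag_mx m n (phi : nat -> R) : 'M[C]_(m, n) :=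
  \matrix_(i < m, j < n) (if (i : nat) == (j : nat) then ((phi i)%:C)%C else 0).

Definition is_svd m n (A : 'M[C]_(m, n)) (U : 'M[C]_m) (V : 'M[C]_n)
  (phi : nat -> R) : Prop :=
  unitary_mx U /\ unitary_mx V /\
  (forall j, (j < minn m n)%N -> 0 <= phi j) /\
  A = U *m rdiag_mx m n phi *m adjmx V.

(* B = S_f(A): B = U Sigma_{f(phi)} V^* for some SVD A = U Sigma_phi V^*.
   (For f with f 0 = 0 this does not depend on the chosen SVD.) *)
Definition svd_fun_rel m n (f : R -> R) (A B : 'M[C]_(m, n)) : Prop :=
  exists U V phi, is_svd A U V phi /\ B = U *m rdiag_mx m n (f \o phi) *m adjmx V.

Definition f0 (sigma0 : R) (x : R) : R := if x < sigma0 then 0 else x.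

Definition real_subspace m n (S : 'M[C]_(m, n) -> Prop) : Prop :=
  S 0 /\ (forall X Y, S X -> S Y -> S (X + Y)) /\
  (forall (a : R) X, S X -> S ((a%:C)%C *: X)).

Definition orth_compl m n (S : 'M[C]_(m, n) -> Prop) (Y : 'M[C]_(m, n)) : Prop :=
  forall Z, S Z -> frob_inner Y Z = 0.

Definition is_orth_proj m n (T : 'M[C]_(m, n) -> Prop)
  (P : 'M[C]_(m, n) -> 'M[C]_(m, n)) : Prop :=
  forall X, T (P X) /\ (forall Z, T Z -> frob_inner (X - P X) Z = 0).

End Defs.

From HB Require Import structures.
From mathcomp Require Import all_boot all_order all_algebra.
From mathcomp Require Import complex.
From mathcomp Require Import reals.
From mathcomp Require Import ring lra.
Import Order.TTheory GRing.Theory Num.Theory.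
Local Open Scope ring_scope.
Set Implicit Arguments. Unset Strict Implicit.

(* Write Y_n = F - Lam_n / 2.  Hard thresholding moves every singular value by
   less than sigma0 and never increases it, so |X_(n+1)| <= |Y_n| and
   X_(n+1) = Y_n - E_n with |E_n|^2 <= M N sigma0^2.  All Lam_n lie in M^perp,
   hence P(X_(n+1)) + Lam_n / 2 is the projection of X_(n+1) + Lam_n / 2 = F - E_n
   and is bounded independently of n.  Finally
   Lam_(n+1) = (1 - alpha_n / 2) Lam_n + (alpha_n / 2) * 2 (P(X_(n+1)) + Lam_n / 2)
   is a convex combination, so by convexity of the squared norm |Lam_n|^2 never
   exceeds 4 (2 |F|^2 + 2 M N sigma0^2). *)

Section FrobeniusInner.
Variables (R : realType) (M N : nat).
Local Notation C := R[i].
Local Notation MX := 'M[C]_(M, N).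
Local Notation sqn X := (frob_inner X X).

Lemma frob_innerE (X Y : MX) : frob_inner X Y =
  \sum_(p : 'I_M * 'I_N) (complex.Re (X p.1 p.2) * complex.Re (Y p.1 p.2)
                          + complex.Im (X p.1 p.2) * complex.Im (Y p.1 p.2)).
Proof.
rewrite /frob_inner /mxtrace raddf_sum /=.
rewrite -(pair_big xpredT xpredT (fun i j => complex.Re (X i j) * complex.Re (Y i j)
  + complex.Im (X i j) * complex.Im (Y i j))) /= exchange_big.
apply: eq_bigr => j _; rewrite mxE raddf_sum; apply: eq_bigr => i _.
by rewrite /adjmx !mxE; case: (X i j) => a b; case: (Y i j) => c d /=; ring.
Qed.

Lemma frob_inner_ge0 (X : MX) : 0 <= sqn X.
Proof.
rewrite frob_innerE; apply: sumr_ge0 => p _.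
by rewrite addr_ge0 // -expr2 sqr_ge0.
Qed.

Lemma frob_inner0l (Y : MX) : frob_inner 0 Y = 0.
Proof. by rewrite frob_innerE big1 // => p _; rewrite mxE /= !mul0r addr0. Qed.

Lemma frob_innerDl (X1 X2 Y : MX) :
  frob_inner (X1 + X2) Y = frob_inner X1 Y + frob_inner X2 Y.
Proof.
rewrite !frob_innerE -big_split; apply: eq_bigr => p _; rewrite mxE.
by case: (X1 _ _) => a b; case: (X2 _ _) => c d /=; ring.
Qed.

Lemma frob_innerZl (a : R) (X Y : MX) :
  frob_inner (a%:C%C *: X) Y = a * frob_inner X Y.
Proof.
rewrite !frob_innerE mulr_sumr; apply: eq_bigr => p _; rewrite mxE.
by case: (X _ _) => c d /=; ring.
Qed.

Lemma orth_compl_subspace (S : MX -> Prop) : real_subspace (orth_compl S).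
Proof.
split; first by move=> Z _; rewrite frob_inner0l.
split=> [Y1 Y2 h1 h2 Z SZ | a Y h Z SZ].
  by rewrite frob_innerDl h1 // h2 // addr0.
by rewrite frob_innerZl h // mulr0.
Qed.

Lemma frob_innerZ (a : R) (X : MX) : sqn (a%:C%C *: X) = a ^+ 2 * sqn X.
Proof.
rewrite !frob_innerE mulr_sumr; apply: eq_bigr => p _; rewrite mxE.
by case: (X _ _) => c d /=; ring.
Qed.

Lemma frob_inner_subr_le (X Y : MX) : sqn (X - Y) <= 2 * sqn X + 2 * sqn Y.
Proof.
rewrite !frob_innerE !mulr_sumr -big_split; apply: ler_sum => p _; rewrite !mxE.
case: (X _ _) => a b; case: (Y _ _) => c d /=.
have : 0 <= (a + c) ^+ 2 + (b + d) ^+ 2 by rewrite addr_ge0 // sqr_ge0.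
nra.
Qed.

Lemma frob_inner_orth_le (W G : MX) : frob_inner (W - G) G = 0 -> sqn G <= sqn W.
Proof.
move=> orthWG; have := frob_inner_ge0 (W - G).
have -> : sqn (W - G) = sqn W - sqn G - 2 * frob_inner (W - G) G.
  rewrite !frob_innerE !mulr_sumr -!sumrB; apply: eq_bigr => p _; rewrite !mxE.
  by case: (W _ _) => a b; case: (G _ _) => c d /=; ring.
by rewrite orthWG mulr0 subr0 subr_ge0.
Qed.

Lemma frob_inner_convex (t : R) (X Y : MX) : 0 <= t <= 1 ->
  sqn (X + t%:C%C *: (Y - X)) <= (1 - t) * sqn X + t * sqn Y.
Proof.
move=> /andP[t0 t1].
rewrite !frob_innerE !mulr_sumr -big_split; apply: ler_sum => p _; rewrite !mxE.
case: (X _ _) => a b; case: (Y _ _) => c d /=.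
have : 0 <= t * (1 - t) * ((a - c) ^+ 2 + (b - d) ^+ 2).
  by rewrite mulr_ge0 ?addr_ge0 ?sqr_ge0 // mulr_ge0 // subr_ge0.
nra.
Qed.

Lemma orth_proj_addr_le (T : MX -> Prop) (P : MX -> MX) (X Y : MX) :
  real_subspace T -> is_orth_proj T P -> T Y -> sqn (P X + Y) <= sqn (X + Y).
Proof.
move=> [_ [TD _]] projP TY; have [TPX orthX] := projP X.
apply: frob_inner_orth_le; rewrite opprD addrACA subrr addr0.
exact/orthX/TD.
Qed.

Lemma adjmxM m n k (A : 'M[C]_(m, n)) (B : 'M[C]_(n, k)) :
  adjmx (A *m B) = adjmx B *m adjmx A.
Proof. by rewrite /adjmx map_mxM trmx_mul. Qed.

Lemma adjmxK m n (A : 'M[C]_(m, n)) : adjmx (adjmx A) = A.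
Proof. by apply/matrixP => i j; rewrite /adjmx !mxE conjcK. Qed.

Lemma frob_inner_unitary (U : 'M[C]_M) (V : 'M[C]_N) (A B : MX) :
  unitary_mx U -> unitary_mx V ->
  frob_inner (U *m A *m adjmx V) (U *m B *m adjmx V) = frob_inner A B.
Proof.
move=> [_ UU] [_ VV]; rewrite /frob_inner !adjmxM adjmxK.
have -> : V *m (adjmx B *m adjmx U) *m (U *m A *m adjmx V)
          = V *m (adjmx B *m A *m adjmx V).
  by rewrite !mulmxA -(mulmxA (V *m adjmx B) (adjmx U) U) UU mulmx1.
by rewrite mxtrace_mulC -(mulmxA (adjmx B *m A)) VV mulmx1.
Qed.

Lemma rdiag_mxB (phi psi : nat -> R) :
  rdiag_mx M N phi - rdiag_mx M N psi = rdiag_mx M N (fun j => phi j - psi j).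
Proof. by apply/matrixP => i j; rewrite !mxE; case: ifP; rewrite ?subr0 // rmorphB. Qed.

Lemma frob_inner_rdiag_le (phi psi : nat -> R) :
  (forall j, (j < minn M N)%N -> phi j ^+ 2 <= psi j ^+ 2) ->
  sqn (rdiag_mx M N phi) <= sqn (rdiag_mx M N psi).
Proof.
move=> le_phi_psi; rewrite !frob_innerE; apply: ler_sum => -[i j] _; rewrite !mxE /=.
case: eqP => [eq_ij | _] //=; rewrite !mulr0 !addr0 -!expr2.
by apply: le_phi_psi; rewrite leq_min ltn_ord eq_ij ltn_ord.
Qed.

Lemma frob_inner_rdiag_const (c : R) :
  sqn (rdiag_mx M N (fun=> c)) <= (M * N)%:R * c ^+ 2.
Proof.
apply: le_trans (_ : _ <= \sum_(p : 'I_M * 'I_N) c ^+ 2) _.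
  rewrite frob_innerE; apply: ler_sum => -[i j] _; rewrite !mxE /=.
  by case: eqP => _ /=; rewrite ?mulr0 ?addr0 -?expr2 ?mul0r ?sqr_ge0.
by rewrite sumr_const card_prod !card_ord mulr_natl.
Qed.

Lemma svd_fun_rel_le (f : R -> R) (A B : MX) :
  (forall x, 0 <= x -> f x ^+ 2 <= x ^+ 2) -> svd_fun_rel f A B -> sqn B <= sqn A.
Proof.
move=> f_le [U [V [phi [[uU [uV [phi_ge0 ->]]] ->]]]].
by rewrite !frob_inner_unitary //; apply: frob_inner_rdiag_le => j /phi_ge0/f_le.
Qed.

Lemma svd_fun_rel_sub_le (f : R -> R) (c : R) (A B : MX) :
  (forall x, 0 <= x -> (x - f x) ^+ 2 <= c ^+ 2) -> svd_fun_rel f A B ->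
  sqn (A - B) <= (M * N)%:R * c ^+ 2.
Proof.
move=> f_near [U [V [phi [[uU [uV [phi_ge0 ->]]] ->]]]].
rewrite -mulmxBl -mulmxBr frob_inner_unitary // rdiag_mxB.
apply: le_trans (frob_inner_rdiag_const c).
by apply: frob_inner_rdiag_le => j /phi_ge0/f_near.
Qed.

End FrobeniusInner.

Lemma f0_sqr_le (R : realType) (s x : R) : f0 s x ^+ 2 <= x ^+ 2.
Proof. by rewrite /f0; case: ifP; rewrite ?expr0n ?sqr_ge0. Qed.

Lemma f0_sub_le (R : realType) (s x : R) : 0 <= x -> (x - f0 s x) ^+ 2 <= s ^+ 2.
Proof.
rewrite /f0; case: ltP => [lt_xs x_ge0 | _ _]; last by rewrite subrr expr0n sqr_ge0.
by rewrite subr0; nra.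
Qed.

Section Iteration.
Variables (R : realType) (M N : nat) (sigma0 : R) (F : 'M[R[i]]_(M, N)).
Variables (Msub : 'M[R[i]]_(M, N) -> Prop) (Pperp : 'M[R[i]]_(M, N) -> 'M[R[i]]_(M, N)).
Variables (alpha : nat -> R) (X Lam : nat -> 'M[R[i]]_(M, N)).
Hypothesis projP : is_orth_proj (orth_compl Msub) Pperp.
Hypothesis alpha_01 : forall n, 0 < alpha n <= 1.
Hypothesis Lam0 : Lam 0%N = 0.
Hypothesis X_def :
  forall n, svd_fun_rel (f0 sigma0) (F - (2^-1 : R[i]) *: Lam n) (X n.+1).
Hypothesis Lam_def : forall n, Lam n.+1 = Lam n + (alpha n)%:C%C *: Pperp (X n.+1).

Local Notation sqn X := (frob_inner X X).
Local Notation K := (2 * sqn F + 2 * ((M * N)%:R * sigma0 ^+ 2)).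

Fact halfC : (2^-1 : R[i]) = (2^-1 : R)%:C%C.
Proof. by rewrite fmorphV rmorph_nat. Qed.

Lemma Lam_orth n : orth_compl Msub (Lam n).
Proof.
have [_ [TD TZ]] := orth_compl_subspace Msub.
elim: n => [|n IH]; first by rewrite Lam0 => Z _; rewrite frob_inner0l.
by rewrite Lam_def; apply: TD IH (TZ _ _ (projP _).1).
Qed.

Lemma X_sqn_le n : sqn (X n.+1) <= 2 * sqn F + 2^-1 * sqn (Lam n).
Proof.
apply: le_trans (svd_fun_rel_le (fun x _ => f0_sqr_le sigma0 x) (X_def n)) _.
rewrite halfC; apply: le_trans (frob_inner_subr_le _ _) _.
rewrite frob_innerZ; lra.
Qed.

Lemma proj_shift_sqn_le n : sqn (Pperp (X n.+1) + (2^-1 : R)%:C%C *: Lam n) <= K.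
Proof.
pose E := F - (2^-1 : R[i]) *: Lam n - X n.+1.
have E_le : sqn E <= (M * N)%:R * sigma0 ^+ 2.
  exact: svd_fun_rel_sub_le (@f0_sub_le R sigma0) (X_def n).
have orth_subspace := orth_compl_subspace Msub; have [_ [_ TZ]] := orth_subspace.
apply: le_trans (orth_proj_addr_le _ orth_subspace projP (TZ 2^-1 _ (Lam_orth n))) _.
have -> : X n.+1 + (2^-1 : R)%:C%C *: Lam n = F - E.
  by apply/matrixP => i j; rewrite /E halfC !mxE; ring.
by apply: le_trans (frob_inner_subr_le _ _) _; lra.
Qed.

Lemma Lam_sqn_step n :
  sqn (Lam n.+1) <= (1 - alpha n / 2) * sqn (Lam n) + alpha n / 2 * (4 * K).
Proof.
have /andP[a_gt0 a_le1] := alpha_01 n.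
pose G := Pperp (X n.+1) + (2^-1 : R)%:C%C *: Lam n.
have -> : Lam n.+1 = Lam n + (alpha n / 2)%:C%C *: ((2 : R)%:C%C *: G - Lam n).
  apply/matrixP => i j; rewrite Lam_def /G !mxE !rmorphM fmorphV !rmorph_nat.
  by field.
apply: le_trans (frob_inner_convex _ _ _) _; first by apply/andP; split; lra.
rewrite frob_innerZ lerD2l; apply: ler_wpM2l; first lra.
by have := proj_shift_sqn_le n; rewrite -/G expr2; lra.
Qed.

Lemma Lam_sqn_le n : sqn (Lam n) <= 4 * K.
Proof.
have MNs_ge0 : 0 <= (M * N)%:R * sigma0 ^+ 2 by rewrite mulr_ge0 ?sqr_ge0.
have K_ge0 : 0 <= K by have := frob_inner_ge0 F; lra.
elim: n => [|n IH]; first by rewrite Lam0 frob_inner0l; lra.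
by apply: le_trans (Lam_sqn_step n) _; have := alpha_01 n; nra.
Qed.

End Iteration.

Unset Implicit Arguments. Set Strict Implicit.

Theorem proposition5 (R : realType) (M N : nat) (sigma0 : R)
  (F : 'M[R[i]]_(M, N)) (Msub : 'M[R[i]]_(M, N) -> Prop)
  (Pperp : 'M[R[i]]_(M, N) -> 'M[R[i]]_(M, N)) (alpha : nat -> R)
  (X Lam : nat -> 'M[R[i]]_(M, N)) :
  0 < sigma0 ->
  real_subspace Msub ->
  is_orth_proj (orth_compl Msub) Pperp ->
  (forall n, 0 < alpha n <= 1) ->
  Lam 0%N = 0 ->
  (forall n : nat, svd_fun_rel (f0 sigma0) (F - (2^-1 : R[i]) *: Lam n) (X n.+1)) ->
  (forall n : nat, Lam n.+1 = Lam n + ((alpha n)%:C)%C *: Pperp (X n.+1)) ->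
  exists B : R, forall n : nat, (1 <= n)%N ->
    frob_norm (X n) <= B /\ frob_norm (Lam n) <= B.
Proof.
move=> _ _ projP alpha_01 Lam0 X_def Lam_def.
have Lam_le := Lam_sqn_le projP alpha_01 Lam0 X_def Lam_def.
have MNs_ge0 : 0 <= (M * N)%:R * sigma0 ^+ 2 by rewrite mulr_ge0 ?sqr_ge0.
have F_ge0 := frob_inner_ge0 F.
set K := 2 * frob_inner F F + 2 * ((M * N)%:R * sigma0 ^+ 2) in Lam_le *.
have K_ge0 : 0 <= 4 * K by rewrite /K; lra.
exists (Num.sqrt (4 * K)) => -[|n] // _.
rewrite /frob_norm !ler_sqrt //; split; last exact: Lam_le.
by have := X_sqn_le X_def n; have := Lam_le n; rewrite /K; lra.
Qed.
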